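(* Let $(C,\mathfrak p,\mathfrak d)$ be a regular $q$-cycle coalgebra with $\mathfrak p_{11}^1\ne0$. Then $\mathfrak d=\mathfrak p$, $\mathfrak p_{j0}^1=\delta_{j1}$ for all $j$, and $\mathfrak p$ depends only on $\mathfrak p_{1k}^1$, $k=1,\dots,n-1$, via the recursive formulas (all indices in $\{0,\dots,n-1\}$): $$\mathfrak p_{j1}^1\mathfrak p_{11}^1=\mathfrak p_{11}^1\sum_{a=0}^{j-1}\mathfrak p_{1a}^1\mathfrak p_{1,j-a}^1-\sum_{l=2}^{j}l\,\mathfrak p_{j-l+1,1}^1\mathfrak p_{1l}^1\quad\text{for }j>1;$$ $$(i+j-1)\mathfrak p_{11}^1\,\mathfrak p_{ij}^1=\sum_{\substack{a+b=j\\ 1\le h\le i\\ (a,h)\ne(j,1)}}\mathfrak p_{ia}^h\mathfrak p_{1b}^1\mathfrak p_{h1}^1-\sum_{\substack{c+d=1\\ 1\le h\le i\\ 1\le l\le j\\ (h,l)\ne(i,j)}}\mathfrak p_{ic}^h\mathfrak p_{jd}^l\mathfrak p_{hl}^1\quad\text{for }i,j>1;$$ $$\mathfrak p_{jk}^l=\sum_{\substack{j_1+j_2=j\\ k_1+k_2=k\\ j_1+k_1\ge1\\ j_2+k_2\ge l-1}}\mathfrak p_{j_1k_1}^1\mathfrak p_{j_2k_2}^{l-1}\quad\text{for }l>1.$$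
   Context: $K$ is an algebraically closed field of characteristic $0$ and $n\ge2$. $C$ is the coalgebra dual to $K[y]/\langle y^n\rangle$: basis $x_0,\dots,x_{n-1}$, $\Delta(x_i)=\sum_{j+k=i}x_j\otimes x_k$, $\epsilon(x_i)=\delta_{i0}$; $C\otimes C$ has the tensor product coalgebra structure; Sweedler notation $\Delta(b)=b_{(1)}\otimes b_{(2)}$. For linear maps $\mathfrak p,\mathfrak d\colon C\otimes C\to C$ write $a\cdot b=\mathfrak p(a\otimes b)$, $a:b=\mathfrak d(a\otimes b)$, $\mathfrak p(x_i\otimes x_j)=\sum_{k=0}^{n-1}\mathfrak p_{ij}^kx_k$, $\mathfrak d(x_i\otimes x_j)=\sum_{k=0}^{n-1}\mathfrak d_{ij}^kx_k$, with the convention $\mathfrak p_{ij}^k=\mathfrak d_{ij}^k=0$ if $k\ge n$, $i<0$ or $j<0$; sums over $a+b=j$, $c+d=1$ etc. range over nonnegative integers. A triple $(C,\mathfrak p,\mathfrak d)$ with $\mathfrak p,\mathfrak d$ coalgebra morphisms is a regular $q$-magma coalgebra if there are coalgebra morphisms $a\otimes b\mapsto a^b$, $a\otimes b\mapsto a_b$ from $C\otimes C$ to $C$ with $a^{b_{(1)}}\cdot b_{(2)}=(a\cdot b_{(1)})^{b_{(2)}}=\epsilon(b)a$ and $(a:b_{(2)})_{b_{(1)}}=a_{b_{(2)}}:b_{(1)}=\epsilon(b)a$. It is a regular $q$-cycle coalgebra if moreover for all $a,b,c$: (1) $(a\cdot b_{(1)})\cdot(c:b_{(2)})=(a\cdot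 c_{(2)})\cdot(b\cdot c_{(1)})$; (2) $(a\cdot b_{(1)}):(c\cdot b_{(2)})=(a:c_{(2)})\cdot(b:c_{(1)})$; (3) $(a:b_{(1)}):(c:b_{(2)})=(a:c_{(2)}):(b\cdot c_{(1)})$. *)

From HB Require Import structures.
From mathcomp Require Import all_boot all_order all_algebra.
Set Implicit Arguments. Unset Strict Implicit. Unset Printing Implicit Defensive.
Import GRing.Theory.
Local Open Scope ring_scope.

(* C = dual coalgebra of K[y]/<y^n>, basis x_0..x_{n-1}.
   A linear map f : C (x) C -> C is given by its structure constants
   f i j k = f_{ij}^k, i.e. f(x_i (x) x_j) = sum_k f_{ij}^k x_k. *)
Definition coefs (K : Type) (n : nat) := 'I_n -> 'I_n -> 'I_n -> K.

(* Extended structure constants on nat indices: 0 when an index is >= n. *)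
Definition cf (K : nzRingType) (n : nat) (f : coefs K n) (i j k : nat) : K :=
  match @insub _ (fun m => m < n)%N 'I_n i,
        @insub _ (fun m => m < n)%N 'I_n j,
        @insub _ (fun m => m < n)%N 'I_n k with
  | Some a, Some b, Some c => f a b c
  | _, _, _ => 0
  end.

(* f : C (x) C -> C is a coalgebra morphism (C (x) C with tensor coalgebra
   structure):  Delta o f = (f (x) f) o Delta_{C(x)C}  and  eps o f = eps (x) eps. *)
Definition coalg_mor (K : nzRingType) (n : nat) (f : coefs K n) : Prop :=
  (forall (i j u v : 'I_n),
      cf f i j (u + v) =
      \sum_(i1 < i.+1) \sum_(j1 < j.+1) cf f i1 j1 u * cf f (i - i1) (j - j1) v)
  /\ (forall (i j : 'I_n), cf f i j 0 = ((i == 0%N :> nat) && (j == 0%N :> nat))%:R).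

(* Regular q-magma coalgebra: coalgebra morphisms L (a (x) b |-> a^b) and
   R (a (x) b |-> a_b) with
   a^{b(1)} . b(2) = (a . b(1))^{b(2)} = eps(b) a and
   (a : b(2))_{b(1)} = a_{b(2)} : b(1) = eps(b) a. *)
Definition regular_q_magma (K : nzRingType) (n : nat) (p d : coefs K n) : Prop :=
  coalg_mor p /\ coalg_mor d /\
  exists L R : coefs K n, coalg_mor L /\ coalg_mor R /\
   forall (i j k : 'I_n),
   [/\ \sum_(j1 < j.+1) \sum_(m < n) cf L i j1 m * cf p m (j - j1) k
         = ((j == 0%N :> nat) && (i == k))%:R,
       \sum_(j1 < j.+1) \sum_(m < n) cf p i j1 m * cf L m (j - j1) k
         = ((j == 0%N :> nat) && (i == k))%:R,
       \sum_(j1 < j.+1) \sum_(m < n) cf d i (j - j1) m * cf R m j1 k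
         = ((j == 0%N :> nat) && (i == k))%:R &
       \sum_(j1 < j.+1) \sum_(m < n) cf R i (j - j1) m * cf d m j1 k
         = ((j == 0%N :> nat) && (i == k))%:R].

(* Regular q-cycle coalgebra: additionally identities (1)-(3), evaluated on
   a = x_i, b = x_j, c = x_k and compared at coefficient x_r. *)
Definition regular_q_cycle (K : nzRingType) (n : nat) (p d : coefs K n) : Prop :=
  regular_q_magma p d /\
  forall (i j k r : 'I_n),
  [/\ (* (1) (a.b(1)).(c:b(2)) = (a.c(2)).(b.c(1)) *)
      \sum_(j1 < j.+1) \sum_(m < n) \sum_(m' < n)
         cf p i j1 m * cf d k (j - j1) m' * cf p m m' r
      = \sum_(k1 < k.+1) \sum_(m < n) \sum_(m' < n)
         cf p i (k - k1) m * cf p j k1 m' * cf p m m' r,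
      (* (2) (a.b(1)):(c.b(2)) = (a:c(2)).(b:c(1)) *)
      \sum_(j1 < j.+1) \sum_(m < n) \sum_(m' < n)
         cf p i j1 m * cf p k (j - j1) m' * cf d m m' r
      = \sum_(k1 < k.+1) \sum_(m < n) \sum_(m' < n)
         cf d i (k - k1) m * cf d j k1 m' * cf p m m' r &
      (* (3) (a:b(1)):(c:b(2)) = (a:c(2)):(b.c(1)) *)
      \sum_(j1 < j.+1) \sum_(m < n) \sum_(m' < n)
         cf d i j1 m * cf d k (j - j1) m' * cf d m m' r
      = \sum_(k1 < k.+1) \sum_(m < n) \sum_(m' < n)
         cf d i (k - k1) m * cf p j k1 m' * cf d m m' r].

From HB Require Import structures.
From mathcomp Require Import all_boot all_order all_algebra.
From mathcomp Require Import zify ring.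
From Stdlib Require Import FunctionalExtensionality.
Set Implicit Arguments. Unset Strict Implicit. Unset Printing Implicit Defensive.
Import GRing.Theory.
Local Open Scope ring_scope.

(** Dually, a coalgebra morphism [f : C (x) C -> C] is an algebra map
    [K[y]/(y^n) -> K[y1,y2]/(y1^n,y2^n)], determined by
    [F = f(y) = sum f_ij^1 y1^i y2^j], and [f_ij^l] is the coefficient of [y1^i y2^j] in [F^l].
    Nilpotency of [F] forces [f_00^1 = 0].  If moreover [f_10^1 <> 0] in characteristic 0,
    then [F] has no pure [y2]-terms, for otherwise the first one, [r y2^m], would give [F^n]
    the nonzero coefficient [n (f_10^1)^(n-1) r] at [y1^(n-1) y2^m]; such an [f] is then
    determined by its level-one constants.
    Regularity gives [p_10^1, d_10^1 <> 0].  Identity (1) with [c = x_0] says that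
    [y |-> p(y,0)] fixes the series [sum p_1m^1 y^m], whose linear coefficient [p_11^1] is
    nonzero; hence [p(y,0) = y].  Comparing identities (1) and (2) at level one then yields
    [(k + m - 1) p_11^1 (p_km^1 - d_km^1) = 0], so [p] and [d] agree at level one by induction,
    whence [d = p].  The recursions are identity (1) at level one and the comultiplicativity
    of [p]. *)

Section NatSums.
Variable R : zmodType.
Implicit Types F : nat -> R.

Lemma big1_nat m N F : (forall i, (m <= i < N)%N -> F i = 0) -> \sum_(m <= i < N) F i = 0.
Proof. by move=> F0; rewrite big_nat_cond big1 // => i /andP[/F0]. Qed.

Lemma big_nat_single m a N F : (m <= a < N)%N ->
  (forall i, (m <= i < N)%N -> i != a -> F i = 0) -> \sum_(m <= i < N) F i = F a.
Proof.
move=> Ha F0; rewrite (bigD1_seq a) ?mem_index_iota ?iota_uniq //= big1_seq ?addr0 //.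
by move=> i /andP[ia]; rewrite mem_index_iota => /F0; apply.
Qed.

Lemma big_nat_restrict lo hi N F : (lo <= hi <= N)%N ->
  (forall a, (a < N)%N -> ~~ (lo <= a < hi)%N -> F a = 0) ->
  \sum_(0 <= a < N) F a = \sum_(lo <= a < hi) F a.
Proof.
move=> /andP[H1 H2] F0.
rewrite (big_cat_nat (leq0n lo) (leq_trans H1 H2)) /= big1_nat ?add0r; last first.
  by move=> a /andP[_ Ha]; apply: F0; lia.
rewrite (big_cat_nat H1 H2) /= [X in _ + X]big1_nat ?addr0 //.
by move=> a /andP[Ha1 Ha2]; apply: F0; lia.
Qed.

Lemma big_nat2_except (F : nat -> nat -> R) a0 a1 b0 b1 x y :
  (a0 <= x < a1)%N -> (b0 <= y < b1)%N ->
  \sum_(a0 <= a < a1) \sum_(b0 <= b < b1 | (a, b) != (x, y)) F a b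
  = \sum_(a0 <= a < a1) \sum_(b0 <= b < b1) F a b - F x y.
Proof.
move=> Hx Hy; apply/eqP; rewrite eq_sym subr_eq; apply/eqP.
have -> : F x y = \sum_(a0 <= a < a1) (if a == x then F x y else 0).
  by rewrite (big_nat_single Hx) ?eqxx // => a _ /negPf->.
rewrite -big_split /=; apply: eq_bigr => a _.
rewrite [LHS](bigID (fun b => (a, b) != (x, y))) /=; congr (_ + _).
rewrite big_mkcond (big_nat_single Hy) /=; last first.
  by move=> b _ nby; rewrite xpair_eqE (negPf nby) andbF.
by rewrite xpair_eqE eqxx andbT; case: eqP => [->|].
Qed.

Lemma big_mkord3 a b c (F : nat -> nat -> nat -> R) :
  \sum_(0 <= x < a) \sum_(0 <= y < b) \sum_(0 <= z < c) F x y z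
  = \sum_(x < a) \sum_(y < b) \sum_(z < c) F x y z.
Proof.
rewrite big_mkord; apply: eq_bigr => x _; rewrite big_mkord.
by apply: eq_bigr => y _; rewrite big_mkord.
Qed.

End NatSums.

(** * Coalgebra morphisms [C (x) C -> C] *)

Section CoalgebraMorphism.
Variables (K : idomainType) (n : nat).
Hypothesis n_gt1 : (1 < n)%N.
Implicit Types f g : coefs K n.

Lemma cf_out f i j k : (n <= i)%N || (n <= j)%N || (n <= k)%N -> cf f i j k = 0.
Proof.
rewrite /cf; case: insubP => [a Ha _|//]; case: insubP => [b Hb _|//].
by case: insubP => [c Hc _|//]; rewrite (leqNgt n i) (leqNgt n j) (leqNgt n k) Ha Hb Hc.
Qed.

Lemma cf_ord f (i j k : 'I_n) : cf f i j k = f i j k.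
Proof. by rewrite /cf !valK. Qed.

Lemma cf_levelD f : coalg_mor f -> forall i j u v,
  (i < n)%N -> (j < n)%N -> (u < n)%N -> (v < n)%N ->
  cf f i j (u + v) = \sum_(0 <= i1 < i.+1) \sum_(0 <= j1 < j.+1)
       cf f i1 j1 u * cf f (i - i1) (j - j1) v.
Proof.
move=> [fD _] i j u v Hi Hj Hu Hv.
rewrite (fD (Ordinal Hi) (Ordinal Hj) (Ordinal Hu) (Ordinal Hv)) /= big_mkord.
by apply: eq_bigr => i1 _; rewrite big_mkord.
Qed.

Lemma cf_level0 f : coalg_mor f -> forall i j, cf f i j 0 = ((i == 0%N) && (j == 0%N))%:R.
Proof.
move=> [_ f0] i j.
case: (ltnP i n) => Hi; last by rewrite cf_out ?Hi //; case: eqP => //; lia.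
case: (ltnP j n) => Hj; last by rewrite cf_out ?Hj ?orbT // andbC; case: eqP => //; lia.
exact: (f0 (Ordinal Hi) (Ordinal Hj)).
Qed.

Section Morphism.
Variable f : coefs K n.
Hypothesis Hf : coalg_mor f.

Lemma cf00_level1 : cf f 0 0 1 = 0.
Proof.
have pow l : (0 < l < n)%N -> cf f 0 0 l = cf f 0 0 1 ^+ l.
  elim: l => [//|[|l] IH] /andP[_ Hl]; first by rewrite expr1.
  rewrite -add1n (cf_levelD Hf); try lia.
  by rewrite !big_nat1 IH ?exprS //; lia.
have : cf f 0 0 (1 + n.-1) = 0 by rewrite cf_out //; apply/orP; right; lia.
rewrite (cf_levelD Hf); try lia.
rewrite !big_nat1 subnn (pow n.-1); last by lia.
rewrite -exprS prednK; last by lia.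
by move/eqP; rewrite expf_eq0 => /andP[_ /eqP].
Qed.

Lemma cf_deg_lt_level l i j : (i + j < l)%N -> cf f i j l = 0.
Proof.
elim: l i j => [//|l IH] i j H.
case: (ltnP l.+1 n) => Hl; last by rewrite cf_out // Hl !orbT.
case: (ltnP i n) => Hi; last by rewrite cf_out // Hi.
case: (ltnP j n) => Hj; last by rewrite cf_out // Hj orbT.
rewrite -add1n (cf_levelD Hf) //; try lia.
apply: big1_nat => i1 /andP[_ Hi1]; apply: big1_nat => j1 /andP[_ Hj1].
case: (boolP ((i1 == 0%N) && (j1 == 0%N))) => [/andP[/eqP-> /eqP->]|Hne].
  by rewrite cf00_level1 mul0r.
by rewrite IH ?mulr0 //; lia.
Qed.

Lemma cf_diag_right0 l : (l < n)%N -> cf f l 0 l = cf f 1 0 1 ^+ l.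
Proof.
elim: l => [_|l IH Hl]; first by rewrite (cf_level0 Hf) expr0.
rewrite -add1n (cf_levelD Hf); try lia.
rewrite (@big_nat_single _ 0 1 l.+2) /=; try lia.
  by rewrite big_nat1 subn1 /= IH ?exprS //; lia.
move=> i1 Hi1 Hne; rewrite big_nat1.
case: (i1 =P 0%N) => [->|Hi0]; first by rewrite cf00_level1 mul0r.
by rewrite (cf_deg_lt_level (l := l)) ?mulr0 //; lia.
Qed.

Section PureY2Terms.
Variable m : nat.
Hypothesis m_gt0 : (0 < m)%N.
Hypothesis cf0_below : forall j, (j < m)%N -> cf f 0 j 1 = 0.

(* With [y1] of weight [m] and [y2] of weight 1, [F] has weight at least [m],
   so [F^l] has no monomial [y1^i y2^j] of weight [m i + j < m l]. *)
Lemma cf_weighted_deg_lt_level l i j :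
  (l < n)%N -> (i < l)%N -> (j < m * (l - i))%N -> cf f i j l = 0.
Proof.
elim: l i j => [//|l IH] i j Hl Hi Hj.
case: (ltnP j n) => Hjn; last by rewrite cf_out // Hjn orbT.
rewrite -add1n (cf_levelD Hf); try lia.
apply: big1_nat => i1 /andP[_ Hi1]; apply: big1_nat => j1 /andP[_ Hj1].
case: (i1 =P 0%N) => [->|Hi0].
- case: (ltnP j1 m) => Hj1m; first by rewrite cf0_below // mul0r.
  have Hil : (i < l)%N.
    case: (ltnP i l) => // Hil; have E : (l.+1 - i = 1)%N by lia.
    by move: Hj; rewrite E muln1; lia.
  have E : (m * (l.+1 - i) = m + m * (l - i))%N by rewrite subSn ?mulnS.
  by rewrite subn0 IH ?mulr0 //; lia.
- have : (m * (l.+1 - i) <= m * (l - (i - i1)))%N by rewrite leq_mul2l; lia.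
  by move=> Hle; rewrite IH ?mulr0 //; lia.
Qed.

Lemma cf_first_pure_y2 k : (k < n)%N ->
  cf f k m k.+1 = k.+1%:R * cf f 1 0 1 ^+ k * cf f 0 m 1.
Proof.
have [Hm|Hm] := ltnP m n; last first.
  have out i l : cf f i m l = 0 by rewrite cf_out // Hm orbT.
  by rewrite !out mulr0.
elim: k => [_|k IH Hk]; first by rewrite expr0 mulr1 mul1r.
rewrite -[k.+2]add1n (cf_levelD Hf); try lia.
rewrite big_ltn // big_ltn // (@big_nat_single _ 0 m m.+1); try lia; last first.
  by move=> j1 Hj1 Hne; rewrite cf0_below ?mul0r //; lia.
rewrite !subn0 subnn cf_diag_right0 //.
rewrite (@big_nat_single _ 0 0 m.+1); try lia; last first.
  move=> j1 Hj1 Hne.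
  by rewrite (@cf_weighted_deg_lt_level k.+1) ?mulr0 //; lia.
rewrite big1_nat ?addr0; last first.
  move=> i1 /andP[Hi1 Hi1']; apply: big1_nat => j1 /andP[_ Hj1].
  rewrite (@cf_weighted_deg_lt_level k.+1) ?mulr0 //; try lia.
  by rewrite subKn; nia.
rewrite subn0 subn1 /= IH; last by lia.
rewrite !exprS -[k.+2%:R]natr1 -[k.+1%:R]natr1; ring.
Qed.

End PureY2Terms.

Lemma cf_left0_level1 : cf f 1 0 1 != 0 ->
  (forall k, (k%:R == 0 :> K) = (k == 0%N)) -> forall j, cf f 0 j 1 = 0.
Proof.
move=> f101 char0 j; apply/eqP/negP => /negP nz.
have [Hj | Hj] := ltnP j n; last by move: nz; rewrite cf_out ?eqxx // Hj orbT.
have ex_nz : exists j, (j < n)%N && (cf f 0 j 1 != 0) by exists j; rewrite Hj nz.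
have [m /andP[Hmn Hr] Hmin] := ex_minnP ex_nz.
have below j' : (j' < m)%N -> cf f 0 j' 1 = 0.
  move=> Hj'; apply/eqP/negP => /negP nz'.
  have [Hj'n|Hj'n] := ltnP j' n; last by move: nz'; rewrite cf_out ?eqxx // Hj'n orbT.
  by have := Hmin j'; rewrite Hj'n nz' => /(_ isT); lia.
have m_gt0 : (0 < m)%N by case: m Hr {Hmin Hmn below} => // Hr; rewrite cf00_level1 eqxx in Hr.
have last_row : (n.-1 < n)%N by lia.
have := cf_first_pure_y2 m_gt0 below last_row.
rewrite prednK 1?cf_out ?leqnn ?orbT //; try lia.
move/esym/eqP; rewrite !mulf_eq0 char0 expf_eq0 (negPf f101) (negPf Hr) andbF /=; lia.
Qed.

Lemma cf_right0_higher t : (t < n)%N ->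
  (forall t', (t' < t)%N -> forall b, (0 < b)%N -> cf f t' 0 b = (b == t')%:R) ->
  forall b, (1 < b)%N -> cf f t 0 b = (b == t)%:R.
Proof.
move=> Ht IHt b Hb.
have [Hbn|Hbn] := ltnP b n; last by rewrite cf_out ?Hbn ?orbT //; case: eqP => //; lia.
have Eb : b = (1 + b.-1)%N by lia.
rewrite [in LHS]Eb (cf_levelD Hf); try lia.
under eq_bigr => i1 _ do rewrite big_nat1.
have [Ht2|Ht2] := ltnP t 2.
  rewrite big1_nat; first by case: eqP => //; lia.
  move=> i1 /andP[_ Hi1]; case: (i1 =P 0%N) => [->|Hi0]; first by rewrite cf00_level1 mul0r.
  by rewrite (@cf_deg_lt_level b.-1) ?mulr0 //; lia.
rewrite (@big_nat_single _ 0 1 t.+1); [|lia|]; last first.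
  move=> i1 Hi1 Hne; case: (i1 =P 0%N) => [->|Hi0]; first by rewrite cf00_level1 mul0r.
  case: (i1 =P t) => [->|Hit].
    by rewrite subnn (@cf_deg_lt_level b.-1) ?mulr0 //; lia.
  by rewrite IHt 1?eq_sym ?(negPf Hne) ?mul0r //; lia.
rewrite IHt ?eqxx ?mul1r; try lia.
rewrite IHt; try lia.
by congr (_%:R); case: eqP => E1; case: eqP => E2 //; lia.
Qed.

Lemma cf_right0_of_fixed (c : nat -> K) : c 1%N != 0 ->
  (forall k, (k < n)%N -> \sum_(0 <= m < n) cf f k 0 m * c m = c k) ->
  forall t b, (t < n)%N -> cf f t 0 b = (b == t)%:R.
Proof.
move=> c1 fixed t b Ht.
case: b => [|b]; first by rewrite (cf_level0 Hf) andbT eq_sym.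
elim/ltn_ind: t Ht b => t IHt Ht b.
have lower t' : (t' < t)%N -> forall b', (0 < b')%N -> cf f t' 0 b' = (b' == t')%:R.
  by move=> Ht' [//|b'] _; apply: IHt => //; apply: ltn_trans Ht.
have higher := cf_right0_higher Ht lower.
case: b => [|b]; last exact: higher.
have : \sum_(0 <= m < n) (cf f t 0 m - (m == t)%:R) * c m = 0.
  rewrite (eq_bigr _ (fun m _ => mulrBl _ _ _)) sumrB fixed //.
  rewrite (@big_nat_single _ 0 t n) ?eqxx ?mul1r ?subrr //.
  by move=> m _ /negPf->; rewrite mul0r.
rewrite (@big_nat_single _ 0 1 n); [|lia|].
  by move/eqP; rewrite mulf_eq0 (negPf c1) orbF subr_eq0 => /eqP.
move=> [_ _|[//|m] _ _]; first by rewrite (cf_level0 Hf) andbT eq_sym subrr mul0r.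
by rewrite higher // subrr mul0r.
Qed.

Lemma cf_level_expand j k l : (j < n)%N -> (k < n)%N -> (1 < l < n)%N ->
  cf f j k l
  = \sum_(0 <= j1 < j.+1) \sum_(0 <= k1 < k.+1
         | (1 <= j1 + k1)%N && (l.-1 <= (j - j1) + (k - k1))%N)
       cf f j1 k1 1 * cf f (j - j1) (k - k1) l.-1.
Proof.
move=> Hj Hk /andP[Hl1 Hl].
have El : l = (1 + l.-1)%N by lia.
rewrite [in LHS]El (cf_levelD Hf); try lia.
apply: eq_bigr => j1 _; rewrite [RHS]big_mkcond /=.
apply: eq_bigr => k1 _; case: ifP => // /negbT; rewrite negb_and => /orP[H|H].
  have [-> ->] : j1 = 0%N /\ k1 = 0%N by lia.
  by rewrite cf00_level1 mul0r.
by rewrite (@cf_deg_lt_level l.-1) ?mulr0 //; lia.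
Qed.

Section LeftVanishing.
Hypothesis left0_level1 : forall j, cf f 0 j 1 = 0.

Lemma cf_row_lt_level l i j : (i < l)%N -> cf f i j l = 0.
Proof.
elim: l i j => [//|l IH] i j Hi.
case: (ltnP l.+1 n) => Hl; last by rewrite cf_out // Hl !orbT.
case: (ltnP i n) => Hin; last by rewrite cf_out // Hin.
case: (ltnP j n) => Hjn; last by rewrite cf_out // Hjn orbT.
rewrite -add1n (cf_levelD Hf); try lia.
apply: big1_nat => i1 /andP[_ Hi1]; apply: big1_nat => j1 /andP[_ Hj1].
case: (i1 =P 0%N) => [->|Hi0]; first by rewrite left0_level1 mul0r.
by rewrite IH ?mulr0 //; lia.
Qed.

Lemma big_row0_collapse c (B : nat -> K) :
  (forall m, (m < n)%N -> cf f 0 c m = 0 -> B m = 0) -> \sum_(0 <= m < n) B m = B 0%N.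
Proof.
move=> B0; apply: big_nat_single => [|m Hm Hne]; first by lia.
by apply: B0; rewrite ?cf_row_lt_level //; lia.
Qed.

Lemma big_row_restrict i c (B : nat -> K) : (0 < i < n)%N ->
  (forall a, (a < n)%N -> cf f i c a = 0 -> B a = 0) ->
  \sum_(0 <= a < n) B a = \sum_(1 <= a < i.+1) B a.
Proof.
move=> Hi B0; apply: big_nat_restrict => [|a Ha Hout]; first by lia.
apply: B0 => //; case: (a =P 0%N) => [->|a_neq0].
  by rewrite (cf_level0 Hf); case: eqP => //; lia.
by rewrite cf_row_lt_level //; lia.
Qed.

Lemma big_row1_collapse c (B : nat -> K) :
  (forall m, (m < n)%N -> cf f 1 c m = 0 -> B m = 0) -> \sum_(0 <= m < n) B m = B 1%N.
Proof. by move=> B0; rewrite (@big_row_restrict 1 c) ?big_nat1 //; lia. Qed.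

Lemma big_row0_weighted c (A : K) (X : nat -> K) :
  \sum_(0 <= m < n) A * cf f 0 c m * X m = A * (c == 0%N)%:R * X 0%N.
Proof.
rewrite (@big_row0_collapse c) ?(cf_level0 Hf) // => m _ ->.
by rewrite mulr0 mul0r.
Qed.

End LeftVanishing.

Section RightUnit.
Hypothesis right0 : forall t b, (t < n)%N -> cf f t 0 b = (b == t)%:R.

Lemma cf_right1 b m : (m < n)%N -> (b <= m)%N -> cf f m 1 b = b%:R * cf f (m - b + 1) 1 1.
Proof.
elim: b m => [|b IH] m Hm Hb; first by rewrite (cf_level0 Hf) andbF mul0r.
rewrite -[b.+1]add1n (cf_levelD Hf); try lia.
under eq_bigr => i1 _ do rewrite big_ltn // big_nat1 !subn0 subnn.
rewrite big_split /=.
rewrite (@big_nat_single _ 0 1 m.+1); [|lia|]; last first.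
  by move=> i1 Hi1 Hne; rewrite right0 1?eq_sym ?(negPf Hne) ?mul0r //; lia.
rewrite (@big_nat_single _ 0 (m - b) m.+1); [|lia|]; last first.
  move=> i1 Hi1 Hne; rewrite (@right0 (m - i1)); last by lia.
  by case: eqP => [E|_]; [move/eqP: Hne; lia | rewrite mulr0].
rewrite right0 // eqxx mul1r IH; try lia.
rewrite right0; last by lia.
have -> : (b == (m - (m - b))%N) by apply/eqP; lia.
have -> : (m - 1 - b + 1 = m - b)%N by lia.
have -> : (m - b.+1 + 1 = m - b)%N by lia.
rewrite mulr1 -natr1; ring.
Qed.

End RightUnit.
End Morphism.

Section Uniqueness.
Variables f g : coefs K n.
Hypotheses (Hf : coalg_mor f) (Hg : coalg_mor g).

Lemma cf_eq_rows_lt k : (forall k', (k' < k)%N -> forall j, cf f k' j 1 = cf g k' j 1) ->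
  forall l k' j, (k' < k)%N -> cf f k' j l = cf g k' j l.
Proof.
move=> eq1; elim=> [|l IH] k' j Hk'; first by rewrite (cf_level0 Hf) (cf_level0 Hg).
case: (ltnP l.+1 n) => Hl; last by rewrite !cf_out // Hl !orbT.
case: (ltnP k' n) => Hkn; last by rewrite !cf_out // Hkn.
case: (ltnP j n) => Hjn; last by rewrite !cf_out // Hjn orbT.
rewrite -[l.+1]add1n (cf_levelD Hf) ?(cf_levelD Hg); try lia.
apply: eq_big_nat => i1 /andP[_ Hi1]; apply: eq_bigr => j1 _.
rewrite eq1 ?IH //; lia.
Qed.

Lemma coalg_mor_eq : (forall k j, (k < n)%N -> (j < n)%N -> cf f k j 1 = cf g k j 1) -> f = g.
Proof.
move=> eq1; have eq_all l i j : cf f i j l = cf g i j l.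
  have [Hi|Hi] := ltnP i n; last by rewrite !cf_out // Hi.
  apply: (@cf_eq_rows_lt n) => // k' Hk' j'.
  by have [Hj'|Hj'] := ltnP j' n; [exact: eq1 | rewrite !cf_out // Hj' orbT].
apply: functional_extensionality => i; apply: functional_extensionality => j.
by apply: functional_extensionality => l; rewrite -!cf_ord eq_all.
Qed.

Hypotheses (f_left0 : forall j, cf f 0 j 1 = 0) (g_left0 : forall j, cf g 0 j 1 = 0).

Lemma cf_eq_row_level_gt1 k : (forall k', (k' < k)%N -> forall j, cf f k' j 1 = cf g k' j 1) ->
  forall l j, (1 < l)%N -> cf f k j l = cf g k j l.
Proof.
move=> eq1 l j Hl.
case: (ltnP l n) => Hln; last by rewrite !cf_out // Hln !orbT.
case: (ltnP k n) => Hkn; last by rewrite !cf_out // Hkn.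
case: (ltnP j n) => Hjn; last by rewrite !cf_out // Hjn orbT.
have El : l = (1 + l.-1)%N by lia.
rewrite El (cf_levelD Hf) ?(cf_levelD Hg); try lia.
apply: eq_big_nat => i1 /andP[_ Hi1]; apply: eq_bigr => j1 _.
case: (i1 =P 0%N) => [->|Hi0]; first by rewrite f_left0 g_left0 !mul0r.
case: (i1 =P k) => [->|Hik].
  rewrite subnn [cf f 0 _ _](cf_row_lt_level Hf f_left0) //; last by lia.
  by rewrite [cf g 0 _ _](cf_row_lt_level Hg g_left0) ?mulr0 //; lia.
by rewrite eq1 ?(cf_eq_rows_lt eq1) //; lia.
Qed.

End Uniqueness.
End CoalgebraMorphism.

(** * Regular q-cycle coalgebras *)

Lemma q_magma_cf101_neq0 (K : idomainType) (n : nat) (p d : coefs K n) : (1 < n)%N ->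
  regular_q_magma p d -> cf p 1 0 1 != 0 /\ cf d 1 0 1 != 0.
Proof.
move=> n_gt1 [Hp [Hd [L [R [HL [HR inv]]]]]].
have n_gt0 : (0 < n)%N by lia.
have [invL _ invR _] := inv (Ordinal n_gt1) (Ordinal n_gt0) (Ordinal n_gt1).
have only1 (f : coefs K n) (F : 'I_n -> K) : coalg_mor f ->
    (forall m : 'I_n, cf f 1 0 m = 0 -> F m = 0) -> \sum_(m < n) F m = F (Ordinal n_gt1).
  move=> Hf F0; rewrite (bigD1 (Ordinal n_gt1)) //= big1 ?addr0 // => -[m Hm].
  rewrite -val_eqE /= => m_neq1; apply: F0 => /=.
  case: (m =P 0%N) => [->|m_neq0]; first by rewrite (cf_level0 n_gt1 Hf).
  by rewrite (cf_deg_lt_level n_gt1 Hf) //; lia.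
move: invL invR; rewrite !big_ord1 /= (only1 _ _ HL) => [|m ->]; last by rewrite mul0r.
rewrite (only1 _ _ Hd) => [|m ->]; last by rewrite mul0r.
by split; apply/negP => /eqP f0; [move: invL | move: invR];
  rewrite f0 ?mulr0 ?mul0r => /eqP; rewrite eq_sym oner_eq0.
Qed.

Section QCycle.
Variables (K : idomainType) (n : nat).
Hypothesis n_gt1 : (1 < n)%N.
Hypothesis char0 : forall k, (k%:R == 0 :> K) = (k == 0%N).
Variables p d : coefs K n.
Hypothesis Hpd : regular_q_cycle p d.
Hypothesis p111 : cf p 1 1 1 != 0.

Let Hp : coalg_mor p. Proof. by case: Hpd => [[]]. Qed.
Let Hd : coalg_mor d. Proof. by case: Hpd => [[_ []]]. Qed.

Lemma p_left0 j : cf p 0 j 1 = 0.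
Proof.
by apply: (cf_left0_level1 n_gt1 Hp _ char0); case: (q_magma_cf101_neq0 n_gt1 Hpd.1).
Qed.

Lemma d_left0 j : cf d 0 j 1 = 0.
Proof.
by apply: (cf_left0_level1 n_gt1 Hd _ char0); case: (q_magma_cf101_neq0 n_gt1 Hpd.1).
Qed.

Let p_row0 := big_row0_weighted n_gt1 Hp p_left0.
Let d_row0 := big_row0_weighted n_gt1 Hd d_left0.
Let p_row1 := big_row1_collapse n_gt1 Hp p_left0.
Let d_row1 := big_row1_collapse n_gt1 Hd d_left0.
Let p_row_restrict := big_row_restrict n_gt1 Hp p_left0.
Let p_row_lt_level := cf_row_lt_level n_gt1 Hp p_left0.

Lemma q_cycle_id1 i j k : (i < n)%N -> (j < n)%N -> (k < n)%N ->
  \sum_(0 <= j1 < j.+1) \sum_(0 <= m < n) \sum_(0 <= m' < n)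
     cf p i j1 m * cf d k (j - j1) m' * cf p m m' 1
  = \sum_(0 <= k1 < k.+1) \sum_(0 <= m < n) \sum_(0 <= m' < n)
     cf p i (k - k1) m * cf p j k1 m' * cf p m m' 1.
Proof.
move=> Hi Hj Hk; rewrite !big_mkord3.
by case: (Hpd.2 (Ordinal Hi) (Ordinal Hj) (Ordinal Hk) (Ordinal n_gt1)) => + _ _; apply.
Qed.

Lemma q_cycle_id2 i j k : (i < n)%N -> (j < n)%N -> (k < n)%N ->
  \sum_(0 <= j1 < j.+1) \sum_(0 <= m < n) \sum_(0 <= m' < n)
     cf p i j1 m * cf p k (j - j1) m' * cf d m m' 1
  = \sum_(0 <= k1 < k.+1) \sum_(0 <= m < n) \sum_(0 <= m' < n)
     cf d i (k - k1) m * cf d j k1 m' * cf p m m' 1.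
Proof.
move=> Hi Hj Hk; rewrite !big_mkord3.
by case: (Hpd.2 (Ordinal Hi) (Ordinal Hj) (Ordinal Hk) (Ordinal n_gt1)) => _ + _; apply.
Qed.

Lemma p_row1_relation k : (k < n)%N ->
  cf p 1 k 1 * cf p 1 0 1 = cf p 1 0 1 * \sum_(0 <= m < n) cf p k 0 m * cf p 1 m 1.
Proof.
move=> Hk; have := q_cycle_id1 n_gt1 Hk (ltnW n_gt1).
under eq_bigr => j1 _ do under eq_bigr => m _ do rewrite d_row0.
rewrite big_nat1 (@p_row1 0); last first.
  by move=> m _ p0; apply: big1_nat => m' _; rewrite p0 !mul0r.
rewrite (@big_nat_single _ 0 k k.+1); [|lia|]; last first.
  move=> j1 Hj1 Hne; apply: big1_nat => m _.
  by rewrite (_ : (k - j1 == 0)%N = false) ?mulr0 ?mul0r //; apply/negbTE; lia.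
rewrite (@p_row1 k); last by move=> m _ ->; rewrite !mul0r.
rewrite subnn eqxx mulr1 => ->.
by rewrite big_distrr /=; apply: eq_bigr => m _; rewrite mulrA.
Qed.

Lemma cf_p101_eq1 : cf p 1 0 1 = 1.
Proof.
have p101 : cf p 1 0 1 != 0 by case: (q_magma_cf101_neq0 n_gt1 Hpd.1).
have := p_row1_relation n_gt1.
rewrite (@p_row1 0); last by move=> m _ ->; rewrite mul0r.
rewrite [LHS]mulrC => /(mulfI p101); rewrite -{1}[cf p 1 1 1]mul1r.
by move/(mulIf p111)->.
Qed.

Lemma p_right0 t b : (t < n)%N -> cf p t 0 b = (b == t)%:R.
Proof.
apply: (@cf_right0_of_fixed _ _ n_gt1 _ Hp (fun m => cf p 1 m 1) p111) => k Hk.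
by have := p_row1_relation Hk; rewrite cf_p101_eq1 mulr1 mul1r.
Qed.

Let p_right1 := cf_right1 n_gt1 Hp p_right0.

Lemma d_right0 t b : (t < n)%N -> cf d t 0 b = (b == t)%:R.
Proof.
apply: (@cf_right0_of_fixed _ _ n_gt1 _ Hd (fun m => cf p 1 m 1) p111) => k Hk.
have := q_cycle_id1 n_gt1 (ltnW n_gt1) Hk.
rewrite big_nat1 (@p_row1 0); last first.
  by move=> m _ p0; apply: big1_nat => m' _; rewrite p0 !mul0r.
under [in RHS]eq_bigr => k1 _ do under eq_bigr => m _ do rewrite p_row0.
rewrite (@big_nat_single _ 0 0 k.+1); [|lia|]; last first.
  by move=> k1 Hk1 /negPf->; apply: big1_nat => m _; rewrite mulr0 mul0r.
rewrite [in RHS](@p_row1 (k - 0)); last first.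
  by move=> m _ ->; rewrite !mul0r.
rewrite cf_p101_eq1 [(k - 0)%N]subn0 eqxx !mulr1 => <-.
by apply: eq_bigr => m _; rewrite mul1r.
Qed.

Section LevelOneAgreement.
Variables k m : nat.
Hypotheses (Hk : (k < n)%N) (Hm : (m < n)%N).
Hypothesis eq_rows_lt : forall k', (k' < k)%N -> forall j, cf p k' j 1 = cf d k' j 1.
Hypothesis eq_cols_lt : forall j, (j < m)%N -> cf p k j 1 = cf d k j 1.

Lemma cf_eq_row_level_ne1 j a : a != 1%N -> cf p k j a = cf d k j a.
Proof.
move=> a_neq1; have [a_gt1|a_le1] := ltnP 1 a.
  exact: (cf_eq_row_level_gt1 n_gt1 Hp Hd p_left0 d_left0 eq_rows_lt).
have -> : a = 0%N by lia.
by rewrite (cf_level0 n_gt1 Hp) (cf_level0 n_gt1 Hd).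
Qed.

Lemma cf_eq_cols_lt j a : (j < m)%N -> cf p k j a = cf d k j a.
Proof.
move=> Hj; case: (a =P 1%N) => [->|/eqP a_neq1]; first exact: eq_cols_lt.
exact: cf_eq_row_level_ne1.
Qed.

Lemma id1_lhs_sub_id2_rhs :
  \sum_(0 <= j1 < m.+1) \sum_(0 <= a < n) \sum_(0 <= b < n)
     cf p k j1 a * cf d 1 (m - j1) b * cf p a b 1
  - \sum_(0 <= k1 < m.+1) \sum_(0 <= a < n) \sum_(0 <= b < n)
     cf d k (m - k1) a * cf d 1 k1 b * cf p a b 1
  = (cf p k m 1 - cf d k m 1) * cf p 1 1 1.
Proof.
have collapse (e : coefs K n) j1 a :
    \sum_(0 <= b < n) cf e k j1 a * cf d 1 (m - j1) b * cf p a b 1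
    = cf e k j1 a * cf d 1 (m - j1) 1 * cf p a 1 1.
  by apply: (@d_row1 (m - j1)) => b _ ->; rewrite mulr0 mul0r.
have -> : \sum_(0 <= k1 < m.+1) \sum_(0 <= a < n) \sum_(0 <= b < n)
     cf d k (m - k1) a * cf d 1 k1 b * cf p a b 1
   = \sum_(0 <= j1 < m.+1) \sum_(0 <= a < n) cf d k j1 a * cf d 1 (m - j1) 1 * cf p a 1 1.
  rewrite big_nat_rev /=; apply: eq_big_nat => j1 Hj1.
  by rewrite add0n subSS subKn; [apply: eq_bigr => a _; apply: collapse | lia].
rewrite [X in X - _](eq_bigr _ (fun j1 _ => eq_bigr _ (fun a _ => collapse p j1 a))).
rewrite -sumrB (@big_nat_single _ 0 m m.+1); [|lia|]; last first.
  move=> j1 Hj1 Hne; rewrite -sumrB big1_nat // => a _.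
  by rewrite cf_eq_cols_lt ?subrr //; lia.
rewrite -sumrB (@big_nat_single _ 0 1 n); [|lia|]; last first.
  by move=> a _ Hne; rewrite cf_eq_row_level_ne1 ?subrr.
by rewrite subnn (d_right0 1) // eqxx !mulr1 -mulrBl.
Qed.

Lemma id1_rhs_sub_id2_lhs :
  \sum_(0 <= k1 < 2) \sum_(0 <= a < n) \sum_(0 <= b < n)
     cf p k (1 - k1) a * cf p m k1 b * cf p a b 1
  - \sum_(0 <= j1 < 2) \sum_(0 <= a < n) \sum_(0 <= b < n)
     cf p k j1 a * cf p m (1 - j1) b * cf d a b 1
  = (k + m)%:R * cf p 1 1 1 * (cf p k m 1 - cf d k m 1).
Proof.
have row_k : \sum_(0 <= a < n) \sum_(0 <= b < n) cf p k 1 a * cf p m 0 b * cf p a b 1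
    - \sum_(0 <= a < n) \sum_(0 <= b < n) cf p k 1 a * cf p m 0 b * cf d a b 1
    = k%:R * cf p 1 1 1 * (cf p k m 1 - cf d k m 1).
  rewrite -sumrB (@big_nat_single _ 0 k n); [|lia|]; last first.
    move=> a _ Hne; rewrite -sumrB big1_nat // => b _.
    case: (ltnP a k) => Hak; first by rewrite eq_rows_lt // subrr.
    by rewrite [cf p k 1 a]p_row_lt_level ?mul0r ?subrr //; lia.
  rewrite -sumrB (@big_nat_single _ 0 m n); [|lia|]; last first.
    by move=> b _ Hne; rewrite p_right0 // (negPf Hne) mulr0 !mul0r subrr.
  rewrite p_right0 // eqxx mulr1 p_right1 // subnn add0n.
  by rewrite -mulrBr.
have col_m : \sum_(0 <= a < n) \sum_(0 <= b < n) cf p k 0 a * cf p m 1 b * cf p a b 1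
    - \sum_(0 <= a < n) \sum_(0 <= b < n) cf p k 0 a * cf p m 1 b * cf d a b 1
    = m%:R * cf p 1 1 1 * (cf p k m 1 - cf d k m 1).
  rewrite -sumrB (@big_nat_single _ 0 k n); [|lia|]; last first.
    move=> a _ Hne; rewrite -sumrB big1_nat // => b _.
    by rewrite p_right0 // (negPf Hne) !mul0r subrr.
  rewrite -sumrB (@big_nat_single _ 0 m n); [|lia|]; last first.
    move=> b _ Hne; case: (ltnP b m) => Hbm; first by rewrite eq_cols_lt // subrr.
    by rewrite [cf p m 1 b]p_row_lt_level ?mulr0 ?mul0r ?subrr //; lia.
  rewrite p_right0 // eqxx mul1r p_right1 // subnn add0n.
  by rewrite -mulrBr.
rewrite big_ltn // big_nat1 [X in _ - X]big_ltn // big_nat1 subn0 subnn.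
by rewrite [X in _ - X]addrC opprD addrACA row_k col_m natrD !mulrDl.
Qed.

End LevelOneAgreement.

Lemma p_eq_d_level1 k m : (k < n)%N -> (m < n)%N -> cf p k m 1 = cf d k m 1.
Proof.
elim/ltn_ind: k m => k IHk; elim/ltn_ind => m IHm Hk Hm.
case: (k =P 0%N) => [->|k_neq0]; first by rewrite p_left0 d_left0.
have [/andP[/eqP-> /eqP->]|km_neq10] := boolP ((k == 1%N) && (m == 0%N)).
  by rewrite p_right0 ?d_right0.
have eq_rows_lt k' : (k' < k)%N -> forall j, cf p k' j 1 = cf d k' j 1.
  move=> Hk' j; have [Hj|Hj] := ltnP j n; last by rewrite !cf_out // Hj orbT.
  by apply: IHk => //; lia.
have eq_cols_lt j : (j < m)%N -> cf p k j 1 = cf d k j 1.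
  by move=> Hj; apply: IHm => //; lia.
have := id1_rhs_sub_id2_lhs Hk Hm eq_rows_lt eq_cols_lt.
rewrite -(q_cycle_id1 Hk Hm n_gt1) (q_cycle_id2 Hk n_gt1 Hm).
rewrite (id1_lhs_sub_id2_rhs Hk Hm eq_rows_lt eq_cols_lt).
set s := cf p k m 1 - cf d k m 1 => E.
have km_gt1 : (1 < k + m)%N by move: km_neq10; case: eqP; case: eqP => //; lia.
have : ((k + m).-1)%:R * cf p 1 1 1 * s = 0.
  rewrite -(prednK (ltnW km_gt1)) -natr1 in E.
  by apply: (addIr (s * cf p 1 1 1)); rewrite add0r {2}E; ring.
move/eqP; rewrite !mulf_eq0 char0 (negPf p111) orbF => /orP[/eqP|]; first by lia.
by rewrite subr_eq0 => /eqP.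
Qed.

Lemma d_eq_p : d = p.
Proof.
apply: (coalg_mor_eq n_gt1 Hd Hp) => k m Hk Hm; exact/esym/p_eq_d_level1.
Qed.

Lemma q_cycle_id1_reduced i j : (0 < i < n)%N -> (0 < j < n)%N ->
  \sum_(0 <= a < j.+1) \sum_(1 <= h < i.+1) cf p i a h * cf p 1 (j - a) 1 * cf p h 1 1
  = \sum_(0 <= c < 2) \sum_(1 <= h < i.+1) \sum_(1 <= l < j.+1)
      cf p i c h * cf p j (1 - c) l * cf p h l 1.
Proof.
move=> /andP[i_gt0 Hi] /andP[j_gt0 Hj].
have restrict c c' :
    \sum_(0 <= a < n) \sum_(0 <= b < n) cf p i c a * cf p j c' b * cf p a b 1
    = \sum_(1 <= h < i.+1) \sum_(1 <= l < j.+1) cf p i c h * cf p j c' l * cf p h l 1.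
  rewrite (@p_row_restrict i c); [|lia|]; last first.
    by move=> a _ p0; apply: big1_nat => b _; rewrite p0 !mul0r.
  apply: eq_big_nat => h _.
  rewrite (@p_row_restrict j c') //; first by lia.
  by move=> b _ ->; rewrite mulr0 mul0r.
have -> : \sum_(0 <= a < j.+1) \sum_(1 <= h < i.+1) cf p i a h * cf p 1 (j - a) 1 * cf p h 1 1
    = \sum_(0 <= a < j.+1) \sum_(0 <= h < n) \sum_(0 <= b < n)
        cf p i a h * cf p 1 (j - a) b * cf p h b 1.
  apply: eq_bigr => a _.
  rewrite (@p_row_restrict i a); [|lia|]; last first.
    by move=> h _ p0; apply: big1_nat => b _; rewrite p0 !mul0r.
  apply: eq_big_nat => h _; symmetry.
  by apply: (@p_row1 (j - a)) => b _ ->; rewrite mulr0 mul0r.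
have := q_cycle_id1 Hi Hj n_gt1; rewrite d_eq_p => ->.
rewrite big_ltn // big_nat1 [in RHS]big_ltn // [in RHS]big_nat1.
by rewrite !subn0 !subnn !restrict addrC.
Qed.

Lemma p_row1_rec j : (1 < j < n)%N ->
  cf p j 1 1 * cf p 1 1 1
  = cf p 1 1 1 * (\sum_(0 <= a < j) cf p 1 a 1 * cf p 1 (j - a) 1)
    - \sum_(2 <= l < j.+1) l%:R * cf p (j - l + 1) 1 1 * cf p 1 l 1.
Proof.
move=> /andP[j_gt1 Hj].
have c0 : \sum_(1 <= l < j.+1) cf p 1 0 1 * cf p j 1 l * cf p 1 l 1
    = cf p j 1 1 * cf p 1 1 1 + \sum_(2 <= l < j.+1) l%:R * cf p (j - l + 1) 1 1 * cf p 1 l 1.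
  rewrite big_ltn; last by lia.
  rewrite cf_p101_eq1 mul1r; congr (_ + _).
  by apply: eq_big_nat => l /andP[l_gt1 Hl]; rewrite mul1r p_right1 //; lia.
have c1 : \sum_(1 <= l < j.+1) cf p 1 1 1 * cf p j 0 l * cf p 1 l 1 = cf p 1 1 1 * cf p 1 j 1.
  rewrite (@big_nat_single _ 1 j j.+1); first by rewrite p_right0 // eqxx mulr1.
    by lia.
  by move=> l _ Hne; rewrite p_right0 // (negPf Hne) mulr0 mul0r.
have j_range : (0 < j < n)%N by lia.
have := @q_cycle_id1_reduced 1 j n_gt1 j_range.
rewrite big_nat_recr //= [\sum_(0 <= c < 2) _]big_ltn // !big_nat1 subn0 subnn c0 c1.
rewrite cf_p101_eq1 mulr1.
have -> : cf p 1 1 1 * (\sum_(0 <= a < j) cf p 1 a 1 * cf p 1 (j - a) 1)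
    = \sum_(0 <= a < j) \sum_(1 <= h < 2) cf p 1 a h * cf p 1 (j - a) 1 * cf p h 1 1.
  by rewrite mulr_sumr; apply: eq_bigr => a _; rewrite big_nat1 mulrC.
move=> E; apply/eqP; rewrite eq_sym subr_eq; apply/eqP.
by apply: (addIr (cf p 1 j 1 * cf p 1 1 1)); rewrite E; ring.
Qed.

Lemma p_level1_rec i j : (1 < i < n)%N -> (1 < j < n)%N ->
  (i + j - 1)%:R * cf p 1 1 1 * cf p i j 1
  = \sum_(0 <= a < j.+1) \sum_(1 <= h < i.+1 | (a, h) != (j, 1%N))
       cf p i a h * cf p 1 (j - a) 1 * cf p h 1 1
    - \sum_(0 <= c < 2) \sum_(1 <= h < i.+1) \sum_(1 <= l < j.+1 | (h, l) != (i, j))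
       cf p i c h * cf p j (1 - c) l * cf p h l 1.
Proof.
move=> /andP[i_gt1 Hi] /andP[j_gt1 Hj].
rewrite (big_nat2_except (fun a h => cf p i a h * cf p 1 (j - a) 1 * cf p h 1 1)); [|lia|lia].
rewrite (@q_cycle_id1_reduced i j); [|lia|lia].
have except_diag c :
    \sum_(1 <= h < i.+1) \sum_(1 <= l < j.+1 | (h, l) != (i, j))
      cf p i c h * cf p j (1 - c) l * cf p h l 1
    = \sum_(1 <= h < i.+1) \sum_(1 <= l < j.+1) cf p i c h * cf p j (1 - c) l * cf p h l 1
      - cf p i c i * cf p j (1 - c) j * cf p i j 1.
  by rewrite (big_nat2_except (fun h l => cf p i c h * cf p j (1 - c) l * cf p h l 1)) //; lia.
have diag : \sum_(0 <= c < 2) cf p i c i * cf p j (1 - c) j * cf p i j 1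
    = (i + j)%:R * cf p 1 1 1 * cf p i j 1.
  rewrite big_ltn // big_nat1 subn0 subnn !p_right0 // !eqxx /=.
  rewrite (@p_right1 i i) ?(@p_right1 j j) //.
  by rewrite !subnn !add0n natrD; ring.
rewrite (eq_bigr _ (fun c _ => except_diag c)) sumrB diag subnn cf_p101_eq1 natrB; last by lia.
ring.
Qed.

End QCycle.

Theorem proposition4p5 (K : closedFieldType) (n : nat) (p d : coefs K n) :
  [pchar K] =i pred0 -> (2 <= n)%N ->
  regular_q_cycle p d ->
  cf p 1 1 1 != 0 ->
  [/\ d = p,
      (forall j : 'I_n, cf p j 0 1 = (j == 1%N :> nat)%:R),
      (forall j : nat, (1 < j < n)%N ->
         cf p j 1 1 * cf p 1 1 1
         = cf p 1 1 1 * (\sum_(0 <= a < j) cf p 1 a 1 * cf p 1 (j - a) 1)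
           - \sum_(2 <= l < j.+1) l%:R * cf p (j - l + 1) 1 1 * cf p 1 l 1),
      (forall i j : nat, (1 < i < n)%N -> (1 < j < n)%N ->
         (i + j - 1)%:R * cf p 1 1 1 * cf p i j 1
         = \sum_(0 <= a < j.+1) \sum_(1 <= h < i.+1 | (a, h) != (j, 1%N))
              cf p i a h * cf p 1 (j - a) 1 * cf p h 1 1
           - \sum_(0 <= c < 2) \sum_(1 <= h < i.+1) \sum_(1 <= l < j.+1 | (h, l) != (i, j))
              cf p i c h * cf p j (1 - c) l * cf p h l 1) &
      (forall j k l : nat, (j < n)%N -> (k < n)%N -> (1 < l < n)%N ->
         cf p j k l
         = \sum_(0 <= j1 < j.+1) \sum_(0 <= k1 < k.+1
                | (1 <= j1 + k1)%N && (l.-1 <= (j - j1) + (k - k1))%N)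
              cf p j1 k1 1 * cf p (j - j1) (k - k1) l.-1)].
Proof.
move=> charK n_gt1 Hpd p111.
have char0 := (pcharf0P K).1 charK.
split.
- exact: (@d_eq_p K n n_gt1 char0 p d Hpd p111).
- by move=> j; rewrite (p_right0 n_gt1 char0 Hpd p111) // eq_sym.
- exact: (@p_row1_rec K n n_gt1 char0 p d Hpd p111).
- exact: (@p_level1_rec K n n_gt1 char0 p d Hpd p111).
- exact: (@cf_level_expand K n n_gt1 p Hpd.1.1).
Qed.
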